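(* Fix $n$. For every $\breve x\in\mathcal S^n$ and every $\breve z\in\breve{\mathcal Z}^n(\breve x)$ there exists $u=(u^c,u^s)\in\Delta_I\times\Delta_J$ (depending on $\breve x,\breve z$) such that $$b^n(\breve x,\breve z)=h^n-B^n_1\big(\breve x-\langle e,\breve x\rangle^+u^c\big)+B^n_2u^s\langle e,\breve x\rangle^-+\breve\zeta^n(\breve x,\breve z)\big(B^n_1u^c+B^n_2u^s\big).$$ Moreover, for the matrices $B^n_1,B^n_2$ associated with any fixed $(\hat\imath,\hat\jmath)\in\mathcal E$, the column $\hat\jmath$ of $B^n_2$ is identically zero, and there is an ordering of the classes in which $\hat\imath$ is last such that, in that ordering, $B^n_1$ is lower triangular with positive diagonal entries and its last diagonal entry equals $\mu^n_{\hat\imath\hat\jmath}$.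
   Context: Network: $\mathcal I=\{1,\dots,I\}$, $\mathcal J=\{1,\dots,J\}$, edges $\mathcal E\subset\mathcal I\times\mathcal J$ with the bipartite graph $\mathcal G=(\mathcal I\cup\mathcal J,\mathcal E)$ a tree; $i\sim j$ iff $(i,j)\in\mathcal E$, $\mathcal J(i)=\{j:i\sim j\}$, $\mathcal I(j)=\{i:i\sim j\}$; $\mathbb R^{\mathcal G}$ (resp. $\mathbb Z^{\mathcal G}_+$) are arrays $[z_{ij}]\in\mathbb R^{I\times J}$ (resp. with nonnegative integer entries) vanishing for $i\not\sim j$. For each $n$: arrival rates $\lambda^n_i>0$, service rates $\mu^n_{ij}>0$, pool sizes $N^n_j\in\mathbb N$, with the Halfin–Whitt asymptotics $\lambda^n_i/n\to\lambda_i>0$, $N^n_j/n\to\nu_j>0$, $\mu^n_{ij}\to\mu_{ij}>0$, and $(\lambda^n_i-n\lambda_i)/\sqrt n$, $\sqrt n(\mu^n_{ij}-\mu_{ij})$, $\sqrt n(N^n_j/n-\nu_j)$ convergent. Complete resource pooling: the LP ''minimize $\max_j\sum_i\xi_{ij}$ over nonnegative $\xi\in\mathbb R^{\mathcal G}$ subject to $\sum_j\mu_{ij}\nu_j\xi_{ij}=\lambda_i$ $\forall i$'' has a unique solution $\xi^*$, with $\sum_i\xi^*_{ij}=1$ for all $j$ and $\xi^*_{ij}>0$ for $i\sim j$. The map $\Psi$ and matrices: let $\mathcal D=\{(\alpha,\beta)\in\mathbb R^I\times\mathbb R^J:\sum_i\alpha_i=\sum_j\beta_j\}$ and let $\Psi:\mathcal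 D\to\mathbb R^{\mathcal G}$ be the unique linear map with $\sum_j\Psi_{ij}(\alpha,\beta)=\alpha_i$ for all $i$ and $\sum_i\Psi_{ij}(\alpha,\beta)=\beta_j$ for all $j$ (unique since $\mathcal G$ is a tree). Given $(\hat\imath,\hat\jmath)\in\mathcal E$, $B^n_1\in\mathbb R^{I\times I}$, $B^n_2\in\mathbb R^{I\times J}$ are the unique matrices such that column $\hat\jmath$ of $B^n_2$ is zero and $\sum_{j\in\mathcal J(i)}\mu^n_{ij}\Psi_{ij}(\alpha,\beta)=(B^n_1\alpha+B^n_2\beta)_i$ for all $i$ and all $(\alpha,\beta)\in\mathcal D$. $n$-th system in diffusion scale: for $x\in\mathbb Z^I_+$, the work-conserving action set is $\mathcal Z^n(x)=\{z\in\mathbb Z^{\mathcal G}_+: q_i\ge0,\ y_j\ge0,\ q_i\wedge y_j=0\ \forall(i,j)\in\mathcal E\}$ with $q_i=x_i-\sum_jz_{ij}$, $y_j=N^n_j-\sum_iz_{ij}$. Let $\bar z^n_{ij}=\xi^*_{ij}N^n_j$, $\bar x^n_i=\sum_j\bar z^n_{ij}$, $\mathcal S^n=\{\breve x\in\mathbb R^I:\sqrt n\breve x+\bar x^n\in\mathbb Z^I_+\}$, and $\breve{\mathcal Z}^n(\breve x)=\{\breve z:\sqrt n\breve z+\bar z^n\in\mathcal Z^n(\sqrt n\breve x+\bar x^n)\}$. Define $h^n_i:=n^{-1/2}(\lambda^n_i-\sum_{j\in\mathcal J(i)}\mu^n_{ij}\xi^*_{ij}N^n_j)$, the drift $b^n_i(\breve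 x,\breve z):=h^n_i-\sum_{j\in\mathcal J(i)}\mu^n_{ij}\breve z_{ij}$, $\breve q^n_i:=\breve x_i-\sum_j\breve z_{ij}$, $\breve y^n_j:=-\sum_i\breve z_{ij}$, and $\breve\zeta^n(\breve x,\breve z):=\langle e,\breve q^n\rangle\wedge\langle e,\breve y^n\rangle$. Here $e$ is the all-ones vector, $a^\pm$ are positive/negative parts, and $\Delta_I=\{u\in\mathbb R^I_+:\langle e,u\rangle=1\}$, $\Delta_J$ likewise. *)

From HB Require Import structures.
From mathcomp Require Import all_boot all_order all_algebra.
From mathcomp Require Import all_classical all_reals all_analysis.

Set Implicit Arguments.
Unset Strict Implicit.
Unset Printing Implicit Defensive.

Import Order.TTheory GRing.Theory Num.Theory.
Local Open Scope ring_scope.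

Section Defs.
Variables (R : realType) (I J : nat) (E : 'I_I -> 'I_J -> bool).

Definition bip_adj : rel ('I_I + 'I_J) :=
  fun u v => match u, v with
             | inl i, inr j => E i j
             | inr j, inl i => E i j
             | _, _ => false end.

Definition is_tree : Prop :=
  (forall u v, connect bip_adj u v) /\
  #|[set p : 'I_I * 'I_J | E p.1 p.2]| = (I + J).-1.

Definition in_RG (z : 'M[R]_(I, J)) : Prop := forall i j, ~~ E i j -> z i j = 0.

Definition lp_feasible (lam : 'I_I -> R) (mu : 'I_I -> 'I_J -> R)
  (nu : 'I_J -> R) (xi : 'M[R]_(I, J)) : Prop :=
  [/\ in_RG xi, (forall i j, 0 <= xi i j) &
      (forall i, \sum_j mu i j * nu j * xi i j = lam i)].

Definition lp_obj (xi : 'M[R]_(I, J)) : R := \big[Num.max/0]_j \sum_i xi i j.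

Definition lp_unique_solution lam mu nu (xs : 'M[R]_(I, J)) : Prop :=
  [/\ lp_feasible lam mu nu xs,
      (forall xi, lp_feasible lam mu nu xi -> lp_obj xs <= lp_obj xi) &
      (forall xi, lp_feasible lam mu nu xi -> lp_obj xi <= lp_obj xs -> xi = xs)].

Definition in_D (alpha : 'cV[R]_I) (beta : 'cV[R]_J) : Prop :=
  \sum_i alpha i 0 = \sum_j beta j 0.

Definition is_Psi (Psi : 'cV[R]_I -> 'cV[R]_J -> 'M[R]_(I, J)) : Prop :=
  forall alpha beta, in_D alpha beta ->
    [/\ in_RG (Psi alpha beta),
        (forall i, \sum_j Psi alpha beta i j = alpha i 0) &
        (forall j, \sum_i Psi alpha beta i j = beta j 0)].

Definition is_B (mu : 'I_I -> 'I_J -> R) (jh : 'I_J)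
  (Psi : 'cV[R]_I -> 'cV[R]_J -> 'M[R]_(I, J))
  (B1 : 'M[R]_I) (B2 : 'M[R]_(I, J)) : Prop :=
  (forall i, B2 i jh = 0) /\
  (forall alpha beta, in_D alpha beta -> forall i,
     \sum_(j | E i j) mu i j * Psi alpha beta i j = (B1 *m alpha + B2 *m beta) i 0).

Definition work_conserving (N : 'I_J -> nat) (x : 'I_I -> nat)
  (z : 'I_I -> 'I_J -> nat) : Prop :=
  [/\ (forall i j, ~~ E i j -> z i j = 0%N),
      (forall i, \sum_j z i j <= x i)%N,
      (forall j, \sum_i z i j <= N j)%N &
      (forall i j, E i j ->
         minn (x i - \sum_j' z i j') (N j - \sum_i' z i' j) = 0)%N].

Definition zbar (xs : 'M[R]_(I, J)) (N : 'I_J -> nat) : 'M[R]_(I, J) :=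
  \matrix_(i, j) (xs i j * (N j)%:R).

Definition xbar (xs : 'M[R]_(I, J)) (N : 'I_J -> nat) : 'cV[R]_I :=
  \col_i \sum_j zbar xs N i j.

Definition in_S (n : nat) xs N (xb : 'cV[R]_I) : Prop :=
  exists x : 'I_I -> nat,
    forall i, Num.sqrt (n%:R) * xb i 0 + xbar xs N i 0 = (x i)%:R.

Definition in_Zb (n : nat) xs N (xb : 'cV[R]_I) (zb : 'M[R]_(I, J)) : Prop :=
  exists (x : 'I_I -> nat) (z : 'I_I -> 'I_J -> nat),
    [/\ (forall i, Num.sqrt (n%:R) * xb i 0 + xbar xs N i 0 = (x i)%:R),
        (forall i j, Num.sqrt (n%:R) * zb i j + zbar xs N i j = (z i j)%:R) &
        work_conserving N x z].

Definition hvec (n : nat) (lamn : 'I_I -> R) (mun : 'I_I -> 'I_J -> R)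
  (xs : 'M[R]_(I, J)) (N : 'I_J -> nat) : 'cV[R]_I :=
  \col_i ((Num.sqrt (n%:R))^-1 *
           (lamn i - \sum_(j | E i j) mun i j * xs i j * (N j)%:R)).

Definition bvec (h : 'cV[R]_I) (mun : 'I_I -> 'I_J -> R) (zb : 'M[R]_(I, J))
  : 'cV[R]_I :=
  \col_i (h i 0 - \sum_(j | E i j) mun i j * zb i j).

Definition zeta (xb : 'cV[R]_I) (zb : 'M[R]_(I, J)) : R :=
  Num.min (\sum_i (xb i 0 - \sum_j zb i j)) (\sum_j (- \sum_i zb i j)).

Definition posp (a : R) : R := Num.max a 0.
Definition negp (a : R) : R := Num.max (- a) 0.

Definition in_simplex (k : nat) (u : 'cV[R]_k) : Prop :=
  (forall i, 0 <= u i 0) /\ \sum_i u i 0 = 1.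

End Defs.

From HB Require Import structures.
From mathcomp Require Import all_boot all_order all_algebra.
From mathcomp Require Import fingroup perm.
From mathcomp Require Import all_classical all_reals all_analysis.
From mathcomp Require Import zify ring lra.
Import Order.TTheory GRing.Theory Num.Theory.
Import numFieldNormedType.Exports.
Local Open Scope ring_scope.

(* Rooting G at the pool jh,
   every non-root vertex has a parent closer to the root, and since |E| equals
   |V| - 1 every edge joins a vertex to its parent.  Two consequences:
   - a flow on G (an array in R^G) is determined by its row and column sums,
     by peeling parent edges from the leaves (tree_flow_unique);
   - column k of B1 is the mu-weighted unit flow from class k to jh along the
     tree path (B1_column); that flow only meets k and classes closer to the
     root, and leaves k through its parent pool.  Ordering the classes by
     distance to the root, with ih placed last, makes B1 lower triangular with
     diagonal entries mu_{k, parent(k)} (B1_lower_triangular).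
   For the drift identity, Psi applied to the row and column sums of z is z
   itself, so b = h - B1 alpha - B2 beta; the centered queues x - alpha and
   idle servers -beta are nonnegative and are rescaled onto the simplices,
   and the identity is then linear algebra (drift_representation). *)

Lemma row_sum_delta (R : ringType) (m n : nat) (a : 'I_m) (b : 'I_n) i :
  \sum_j (delta_mx a b : 'M[R]_(m, n)) i j = (i == a)%:R.
Proof.
rewrite (bigD1 b) //= big1 ?addr0 => [|j nj]; first by rewrite mxE eqxx andbT.
by rewrite mxE (negbTE nj) andbF.
Qed.

Lemma col_sum_delta (R : ringType) (m n : nat) (a : 'I_m) (b : 'I_n) j :
  \sum_i (delta_mx a b : 'M[R]_(m, n)) i j = (j == b)%:R.
Proof.
rewrite (bigD1 a) //= big1 ?addr0 => [|i ni]; first by rewrite mxE eqxx.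
by rewrite mxE (negbTE ni).
Qed.

Lemma rank_perm {n : nat} {key : 'I_n -> nat} : injective key ->
  exists s : {perm 'I_n}, [/\ forall i, s i = #|[set k | (key i < key k)%N]| :> nat
    & forall i k, (s i < s k)%N -> (key k < key i)%N].
Proof.
move=> key_inj; pose rank i := #|[set k | (key i < key k)%N]|.
have rank_lt i : (rank i < n)%N.
  have : [set k | (key i < key k)%N] \subset [set~ i].
    by apply/fintype.subsetP => k; rewrite !inE; apply: contraTneq => ->; rewrite ltnn.
  move/subset_leq_card; rewrite cardsC1 card_ord /rank; have := ltn_ord i; lia.
have rank_anti i k : (key i < key k)%N -> (rank k < rank i)%N.
  move=> ik; apply: proper_card; apply/properP; split.
    by apply/fintype.subsetP => l; rewrite !inE; exact: ltn_trans.
  by exists k; rewrite !inE ?ltnn.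
have rank_inj : injective (fun i => Ordinal (rank_lt i)).
  move=> i k /(congr1 val) /= e; case: (ltngtP (key i) (key k)) => [ik|ki|/key_inj //].
    by have := rank_anti _ _ ik; rewrite e ltnn.
  by have := rank_anti _ _ ki; rewrite e ltnn.
exists (perm rank_inj); split=> [i|i k]; rewrite !permE //=.
case: (ltngtP (key i) (key k)) => [ik|//|/key_inj ->]; last by rewrite ltnn.
by move=> lt_ik; have := ltn_trans lt_ik (rank_anti _ _ ik); rewrite ltnn.
Qed.

Lemma simplex_scale {R : realType} {k : nat} (a : 'I_k) {v : 'cV[R]_k} :
  (forall i, 0 <= v i 0) -> exists u, in_simplex u /\ v = (\sum_i v i 0) *: u.
Proof.
move=> v_ge0; have [mass0|mass_neq0] := eqVneq (\sum_i v i 0) 0.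
  exists (delta_mx a 0); split.
    by split=> [i|]; [rewrite mxE ler0n | rewrite col_sum_delta].
  rewrite mass0 scale0r; apply/matrixP => i j; rewrite ord1 !mxE.
  exact: (psumr_eq0P (P := predT) (fun i _ => v_ge0 i) mass0).
exists ((\sum_i v i 0)^-1 *: v); split; last by rewrite scalerA mulfV // scale1r.
split=> [i|]; first by rewrite mxE mulr_ge0 // invr_ge0 sumr_ge0.
by rewrite -[RHS](mulVf mass_neq0) mulr_sumr; apply: eq_bigr => i _; rewrite mxE.
Qed.

Lemma posp_add_min (R : realType) (Q Y : R) : posp (Q - Y) + Num.min Q Y = Q.
Proof. by rewrite /posp /Num.max /Num.min; case: ifP; case: ifP => *; lra. Qed.

Lemma negp_add_min (R : realType) (Q Y : R) : negp (Q - Y) + Num.min Q Y = Y.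
Proof. by rewrite /negp /Num.max /Num.min; case: ifP; case: ifP => *; lra. Qed.

(* The drift identity, once the busy servers are written as
   alpha = x - Q u^c and beta = - Y u^s with Q = p + z and Y = m + z. *)
Lemma drift_identity (R : comRingType) (I J : nat) (h x : 'cV[R]_I)
  (B1 : 'M[R]_I) (B2 : 'M[R]_(I, J)) (uc : 'cV[R]_I) (us : 'cV[R]_J) (p m z : R) :
  h - (B1 *m (x - (p + z) *: uc) + B2 *m (- ((m + z) *: us))) =
  h - B1 *m (x - p *: uc) + m *: (B2 *m us) + z *: (B1 *m uc + B2 *m us).
Proof.
rewrite !mulmxBr mulmxN -!scalemxAr.
move: (B1 *m x) (B1 *m uc) (B2 *m us) => a b c.
by apply/matrixP => i j; rewrite !mxE; ring.
Qed.

Section DiffusionScale.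
Context {R : realType} {I J : nat} {E : 'I_I -> 'I_J -> bool} {n : nat}.
Context {xs : 'M[R]_(I, J)} {N : 'I_J -> nat} {xb : 'cV[R]_I} {zb : 'M[R]_(I, J)}.
Context {x : 'I_I -> nat} {z : 'I_I -> 'I_J -> nat}.
Hypothesis n_gt0 : (0 < n)%N.
Hypothesis xb_def : forall i, Num.sqrt (n%:R) * xb i 0 + xbar xs N i 0 = (x i)%:R.
Hypothesis zb_def : forall i j, Num.sqrt (n%:R) * zb i j + zbar xs N i j = (z i j)%:R.
Hypothesis wc : work_conserving E N x z.

Lemma sqrtn_gt0 : 0 < Num.sqrt (n%:R : R).
Proof. by rewrite sqrtr_gt0 ltr0n. Qed.

Lemma zb_scaled i j : Num.sqrt (n%:R) * zb i j = (z i j)%:R - zbar xs N i j.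
Proof. by rewrite -zb_def addrK. Qed.

Lemma zb_in_RG : in_RG E xs -> in_RG E zb.
Proof.
have [z_off _ _ _] := wc; move=> xsG i j nij; have /eqP := zb_scaled i j.
rewrite z_off // mxE xsG // mul0r subrr mulf_eq0 (gt_eqF sqrtn_gt0) /=.
by move/eqP.
Qed.

(* The centered queue length of class [i] is sqrt(n)^-1 times a true
   queue length, hence nonnegative. *)
Lemma scaled_queue_ge0 i : 0 <= xb i 0 - \sum_j zb i j.
Proof.
have [_ row_le _ _] := wc.
have scaled : Num.sqrt n%:R * (xb i 0 - \sum_j zb i j) = (x i)%:R - (\sum_j z i j)%:R.
  have xb_scaled : Num.sqrt n%:R * xb i 0 = (x i)%:R - \sum_j zbar xs N i j.
    by rewrite -(xb_def i) mxE addrK.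
  rewrite mulrBr mulr_sumr (eq_bigr _ (fun j _ => zb_scaled i j)) sumrB natr_sum.
  by rewrite xb_scaled opprB addrA subrK.
by rewrite -(pmulr_rge0 _ sqrtn_gt0) scaled subr_ge0 ler_nat.
Qed.

(* Likewise the centered number of idle servers in pool [j], because the
   fluid solution keeps every pool fully busy. *)
Lemma scaled_idle_ge0 : (forall j, \sum_i xs i j = 1) ->
  forall j, 0 <= - \sum_i zb i j.
Proof.
move=> xs_col1 j; have [_ _ col_le _] := wc.
have scaled : Num.sqrt n%:R * (- \sum_i zb i j) = (N j)%:R - (\sum_i z i j)%:R.
  rewrite mulrN mulr_sumr (eq_bigr _ (fun i _ => zb_scaled i j)) sumrB natr_sum.
  under [X in _ - X]eq_bigr do rewrite mxE.
  by rewrite -mulr_suml xs_col1 mul1r opprB.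
by rewrite -(pmulr_rge0 _ sqrtn_gt0) scaled subr_ge0 ler_nat.
Qed.

End DiffusionScale.

Section SpanningTree.
Context {I J : nat} {E : 'I_I -> 'I_J -> bool} {jh : 'I_J}.
Hypothesis conn : forall u v, connect (bip_adj E) u v.
Hypothesis card_edges : #|[set p : 'I_I * 'I_J | E p.1 p.2]| = (I + J).-1.

Local Notation V := ('I_I + 'I_J)%type.
Local Notation root := (inr jh : V).

Definition path_to_root (v : V) (n : nat) : bool :=
  `[< exists p : seq V, [/\ path (bip_adj E) v p, last v p = root & size p = n] >].

Lemma path_to_root_ex v : exists n, path_to_root v n.
Proof.
have /connectP [p p_path p_last] := conn v root.
by exists (size p); apply/asboolP; exists p.
Qed.

Definition dist (v : V) : nat := ex_minn (path_to_root_ex v).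

Lemma dist_min v n : path_to_root v n -> (dist v <= n)%N.
Proof. by rewrite /dist; case: ex_minnP => m _; apply. Qed.

Lemma dist_path v :
  exists p : seq V, [/\ path (bip_adj E) v p, last v p = root & size p = dist v].
Proof. by rewrite /dist; case: ex_minnP => m /asboolP. Qed.

Lemma dist_eq0 v : dist v = 0%N -> v = root.
Proof. by have [[|w p] [_ <- <-]] := dist_path v. Qed.

Lemma closer_neighbour v :
  v != root -> exists w, bip_adj E v w && (dist w < dist v)%N.
Proof.
move=> v_root; have [[|w p] [/= p_path p_last p_size]] := dist_path v.
  by rewrite p_last eqxx in v_root.
move: p_path => /andP [vw p_path]; exists w; rewrite vw -p_size /=.
by apply: dist_min; apply/asboolP; exists p.
Qed.

Definition parent (v : V) : V :=
  odflt v [pick w | bip_adj E v w && (dist w < dist v)%N].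

Lemma parentP v :
  v != root -> bip_adj E v (parent v) && (dist (parent v) < dist v)%N.
Proof.
move=> /closer_neighbour [w closer_w]; rewrite /parent.
by case: pickP => [x -> //|none]; rewrite none in closer_w.
Qed.

Definition ppool (k : 'I_I) : 'I_J := if parent (inl k) is inr j then j else jh.

Lemma parent_class k :
  [/\ parent (inl k) = inr (ppool k), E k (ppool k)
    & (dist (inr (ppool k)) < dist (inl k))%N].
Proof. by rewrite /ppool; have := parentP (inl k) isT; case: parent => // j /andP []. Qed.

Lemma parent_pool {j : 'I_J} : inr j != root ->
  exists k, [/\ parent (inr j) = inl k, E k j & (dist (inl k) < dist (inr j))%N].
Proof. by move=> /parentP; case: parent => // k /andP [ekj d]; exists k. Qed.

(* Since the graph is a tree (|E| = |V| - 1), every edge joins a vertex to its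
   parent: the parent edges of the |V| - 1 non-root vertices exhaust E. *)
Lemma edge_is_parent_edge {i : 'I_I} {j : 'I_J} : E i j ->
  parent (inl i) = inr j \/ (inr j != root /\ parent (inr j) = inl i).
Proof.
move=> eij.
pose pe (v : V) : 'I_I * 'I_J :=
  match v, parent v with inl i', inr j' | inr j', inl i' => (i', j') | _, _ => (i, j) end.
have pe_edge v : v \in [set~ root] -> pe v \in [set p : 'I_I * 'I_J | E p.1 p.2].
  rewrite !inE; case: v => [k|j'] v_root.
    by rewrite /pe; have [-> ekj _] := parent_class k.
  by rewrite /pe; have [k [-> ekj _]] := parent_pool v_root.
have pe_inj : {in [set~ root] &, injective pe}.
  move=> v w; rewrite !inE; case: v => [k|j1] vr; case: w => [k'|j2] wr.
  - have [e1 _ _] := parent_class k; have [e2 _ _] := parent_class k'.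
    by rewrite /pe e1 e2 => -[->].
  - have [e1 _ d1] := parent_class k; have [k2 [e2 _ d2]] := parent_pool wr.
    rewrite /pe e1 e2 => -[ek ej]; rewrite -ek -ej in d2.
    by have := ltn_trans d1 d2; rewrite ltnn.
  - have [k1 [e1 _ d1]] := parent_pool vr; have [e2 _ d2] := parent_class k'.
    rewrite /pe e1 e2 => -[ek ej]; rewrite -ej -ek in d2.
    by have := ltn_trans d1 d2; rewrite ltnn.
  - have [k1 [e1 _ _]] := parent_pool vr; have [k2 [e2 _ _]] := parent_pool wr.
    by rewrite /pe e1 e2 => -[_ ->].
have image_eq : #|[set pe v | v in [set~ root]]| = #|[set p : 'I_I * 'I_J | E p.1 p.2]|.
  by rewrite card_in_imset // cardsC1 card_sum !card_ord card_edges.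
have sub : [set pe v | v in [set~ root]] \subset [set p : 'I_I * 'I_J | E p.1 p.2].
  by apply/fintype.subsetP => _ /imsetP [v v_root ->]; apply: pe_edge.
have /imsetP [v] : (i, j) \in [set pe v | v in [set~ root]].
  by rewrite (subset_cardP image_eq sub) inE.
rewrite !inE; case: v => [k|j'] v_root.
  by have [e1 _ _] := parent_class k; rewrite /pe e1 => -[-> ->]; left.
by have [k [e1 _ _]] := parent_pool v_root; rewrite /pe e1 => -[-> ->]; right.
Qed.

(* The depth of an edge: the distance of its endpoint farther from the root,
   i.e. of the child whose parent edge it is. *)
Definition edge_depth i j : nat := maxn (dist (inl i)) (dist (inr j)).

Definition max_dist : nat := \max_(v : V) dist v.

Lemma edge_depth_le i j : (edge_depth i j <= max_dist)%N.
Proof. by rewrite geq_max !(leq_bigmax (F := dist)). Qed.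

(* The other edges at a class are the parent edges of its children, hence
   deeper than the class's own parent edge; dually at a pool. *)
Lemma sibling_at_class {i : 'I_I} {j j' : 'I_J} :
  parent (inl i) = inr j -> E i j' -> j' != j ->
  (edge_depth i j < edge_depth i j')%N.
Proof.
move=> up eij' nj'; have /andP [_ dj] := parentP (inl i) isT; rewrite up in dj.
have [up'|[j'_root down]] := edge_is_parent_edge eij'.
  by move: nj'; rewrite up in up'; case: up' => ->; rewrite eqxx.
have /andP [_ di] := parentP _ j'_root; rewrite down in di.
by rewrite /edge_depth (maxn_idPl (ltnW dj)) (maxn_idPr (ltnW di)).
Qed.

Lemma sibling_at_pool {i i' : 'I_I} {j : 'I_J} :
  inr j != root -> parent (inr j) = inl i -> E i' j -> i' != i ->
  (edge_depth i j < edge_depth i' j)%N.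
Proof.
move=> j_root up ei'j ni'; have /andP [_ di] := parentP _ j_root; rewrite up in di.
have [down|[_ up']] := edge_is_parent_edge ei'j; last first.
  by move: ni'; rewrite up in up'; case: up' => ->; rewrite eqxx.
have /andP [_ dj] := parentP (inl i') isT; rewrite down in dj.
by rewrite /edge_depth (maxn_idPr (ltnW di)) (maxn_idPl (ltnW dj)).
Qed.

Context {R : realType}.

(* A flow on the tree with zero net supply at every node vanishes: peeling
   edges from the leaves, each parent edge carries the flow of its child. *)
Lemma tree_flow0 (w : 'M[R]_(I, J)) : in_RG E w ->
  (forall i, \sum_j w i j = 0) -> (forall j, \sum_i w i j = 0) -> w = 0.
Proof.
move=> wG row0 col0.
suff wE : forall m i j, E i j -> (max_dist - edge_depth i j < m)%N -> w i j = 0.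
  apply/matrixP => i j; rewrite mxE.
  by case eij: (E i j); [exact: (wE _ _ _ eij (ltnSn _)) | apply: wG; rewrite eij].
elim=> // m IH i j eij hm.
have deeper i' j' : E i' j' -> (edge_depth i j < edge_depth i' j')%N -> w i' j' = 0.
  by move=> e d; apply: IH e _; have := edge_depth_le i' j'; lia.
have [up|[j_root down]] := edge_is_parent_edge eij.
- have /eqP := row0 i; rewrite (bigD1 j) //= big1 ?addr0 => [/eqP //|j' nj'].
  case eij': (E i j'); last by apply: wG; rewrite eij'.
  exact: deeper _ _ eij' (sibling_at_class up eij' nj').
- have /eqP := col0 j; rewrite (bigD1 i) //= big1 ?addr0 => [/eqP //|i' ni'].
  case ei'j: (E i' j); last by apply: wG; rewrite ei'j.
  exact: deeper _ _ ei'j (sibling_at_pool j_root down ei'j ni').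
Qed.

(* Hence a flow on the tree is determined by its row and column sums; this is
   why the map Psi is well defined. *)
Lemma tree_flow_unique (A B : 'M[R]_(I, J)) : in_RG E A -> in_RG E B ->
  (forall i, \sum_j A i j = \sum_j B i j) ->
  (forall j, \sum_i A i j = \sum_i B i j) -> A = B.
Proof.
move=> AG BG rowAB colAB; apply/subr0_eq/tree_flow0.
- by move=> i j eij; rewrite !mxE AG // BG // subrr.
- by move=> i; under eq_bigr do rewrite !mxE; rewrite sumrB rowAB subrr.
- by move=> j; under eq_bigr do rewrite !mxE; rewrite sumrB colAB subrr.
Qed.

Definition unit_flow (k : 'I_I) (F : 'M[R]_(I, J)) : Prop :=
  [/\ in_RG E F, forall i, \sum_j F i j = (i == k)%:R
    & forall j, \sum_i F i j = (j == jh)%:R].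

Lemma delta_in_RG {a : 'I_I} {b : 'I_J} :
  E a b -> in_RG E (delta_mx a b : 'M[R]_(I, J)).
Proof.
move=> eab i j nij; rewrite mxE.
by case: eqP => [ea|] //; case: eqP => [eb|] //=; rewrite ea eb eab in nij.
Qed.

Lemma row_sum_path (A B C : 'M[R]_(I, J)) i :
  \sum_j (A - B + C) i j = \sum_j A i j - \sum_j B i j + \sum_j C i j.
Proof. by rewrite -sumrB -big_split; apply: eq_bigr => j _; rewrite !mxE. Qed.

Lemma col_sum_path (A B C : 'M[R]_(I, J)) j :
  \sum_i (A - B + C) i j = \sum_i A i j - \sum_i B i j + \sum_i C i j.
Proof. by rewrite -sumrB -big_split; apply: eq_bigr => i _; rewrite !mxE. Qed.

Definition path_flow (k : 'I_I) (F : 'M[R]_(I, J)) : Prop :=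
  [/\ unit_flow k F,
      forall i j, F i j != 0 -> i = k \/ (dist (inl i) < dist (inl k))%N
    & forall j, F k j = (j == ppool k)%:R].

(* Built by induction on the distance of [k]: one edge to the parent pool,
   one edge back down to that pool's parent class, then recursion. *)
Lemma path_flow_ex k : exists F, path_flow k F.
Proof.
suff: forall n k, (dist (inl k) < n)%N -> exists F, path_flow k F.
  by apply; exact: ltnSn.
elim=> // n IH {}k hk; have [up ekj dj] := parent_class k.
have [pkh|njh] := eqVneq (ppool k) jh.
  exists (delta_mx k jh); split.
  - split; [by rewrite -pkh; exact: delta_in_RG | exact: row_sum_delta
            | exact: col_sum_delta].
  - by move=> i j; rewrite mxE; have [->|_] := eqVneq i k; [left | rewrite eqxx].
  - by move=> j; rewrite mxE pkh eqxx.
have j_root : inr (ppool k) != root by apply: contra njh => /eqP [->].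
have [k' [up' ek'j dk']] := parent_pool j_root.
have dkk' : (dist (inl k') < dist (inl k))%N by exact: ltn_trans dk' dj.
have [F [[FG Frow Fcol] Fsupp _]] := IH k' (leq_trans dkk' hk).
have Fk j : F k j = 0.
  apply/eqP; apply: contraT => /Fsupp [kk'|dkk]; first by rewrite kk' ltnn in dkk'.
  by have := ltn_trans dkk dkk'; rewrite ltnn.
exists (delta_mx k (ppool k) - delta_mx k' (ppool k) + F); split.
- split.
  + move=> i j nij; have := delta_in_RG ekj _ _ nij; have := delta_in_RG ek'j _ _ nij.
    by rewrite !mxE FG // => -> ->; rewrite subrr add0r.
  + by move=> i; rewrite row_sum_path !row_sum_delta Frow addrNK.
  + by move=> j; rewrite col_sum_path !col_sum_delta Fcol subrr add0r.
- move=> i j; have [->|nik] := eqVneq i k; first by left.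
  have [->|nik'] := eqVneq i k'; first by right.
  rewrite !mxE (negbTE nik) (negbTE nik') /= subrr add0r => /Fsupp [ik'|d].
    by rewrite ik' eqxx in nik'.
  by right; exact: ltn_trans d dkk'.
- have nkk' : (k == k') = false by apply: contraTF dkk' => /eqP ->; rewrite ltnn.
  by move=> j; rewrite !mxE Fk nkk' eqxx /= subr0 addr0.
Qed.

Section Coefficients.
Context {mu : 'I_I -> 'I_J -> R} {Psi : 'cV[R]_I -> 'cV[R]_J -> 'M[R]_(I, J)}.
Context {B1 : 'M[R]_I} {B2 : 'M[R]_(I, J)}.
Hypotheses (hPsi : is_Psi E Psi) (hB : is_B E mu jh Psi B1 B2).

(* Column [k] of B1 is the mu-weighted unit flow from [k] to the root, since
   B1 e_k = B1 e_k + B2 e_jh and Psi (e_k, e_jh) is that flow. *)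
Lemma B1_column {k : 'I_I} {F : 'M[R]_(I, J)} : unit_flow k F ->
  forall i, B1 i k = \sum_(j | E i j) mu i j * F i j.
Proof.
move=> [FG Frow Fcol] i; have [B2_jh B_def] := hB.
have hD : in_D (delta_mx k 0 : 'cV[R]_I) (delta_mx jh 0 : 'cV[R]_J).
  by rewrite /in_D !col_sum_delta.
have [PG Prow Pcol] := hPsi _ _ hD.
have -> : F = Psi (delta_mx k 0) (delta_mx jh 0).
  apply: tree_flow_unique => // [i'|j']; first by rewrite Frow Prow mxE andbT.
  by rewrite Fcol Pcol mxE andbT.
by rewrite B_def // -!colE !mxE B2_jh addr0.
Qed.

Lemma B1_diag k : B1 k k = mu k (ppool k).
Proof.
have [F [hF _ Frow_k]] := path_flow_ex k; have [_ ekp _] := parent_class k.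
rewrite (B1_column hF) (bigD1 (ppool k)) //= Frow_k eqxx mulr1 big1 ?addr0 //.
by move=> j /andP [_ nj]; rewrite Frow_k (negbTE nj) mulr0.
Qed.

Context {ih : 'I_I}.
Hypothesis Eh : E ih jh.

Lemma dist_class_gt0 i : (0 < dist (inl i))%N.
Proof. by rewrite lt0n; apply/eqP => /dist_eq0. Qed.

Lemma dist_ih : dist (inl ih) = 1%N.
Proof.
apply/anti_leq; rewrite dist_class_gt0 andbT; apply: dist_min.
by apply/asboolP; exists [:: root]; rewrite /= Eh.
Qed.

Lemma ppool_ih : ppool ih = jh.
Proof.
have [_ _] := parent_class ih; rewrite dist_ih ltnS leqn0 => /eqP /dist_eq0.
by case.
Qed.

Definition class_key (i : 'I_I) : nat :=
  ((if i == ih then 0 else dist (inl i)) * I + i)%N.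

Lemma class_key_inj : injective class_key.
Proof.
move=> i k e; apply: val_inj.
by have := congr1 (modn^~ I) e; rewrite /class_key !modnMDl !modn_small.
Qed.

Lemma class_key_ih k : k != ih -> (class_key ih < class_key k)%N.
Proof.
move=> nkh; rewrite /class_key eqxx (negbTE nkh) mul0n add0n.
have := dist_class_gt0 k; have := ltn_ord ih; have := ltn_ord k.
move: (dist (inl k)) (nat_of_ord ih) (nat_of_ord k) => d a b; nia.
Qed.

Lemma class_key_mono i k :
  (dist (inl i) < dist (inl k))%N -> (class_key i < class_key k)%N.
Proof.
have [->|nkh] := eqVneq k ih.
  by rewrite dist_ih ltnS leqn0 => /eqP /dist_eq0.
have [->|nih] := eqVneq i ih; first by move=> _; exact: class_key_ih.
rewrite /class_key (negbTE nih) (negbTE nkh).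
have := ltn_ord i; have := ltn_ord k.
move: (dist (inl i)) (dist (inl k)) (nat_of_ord i) (nat_of_ord k) => a b c d; nia.
Qed.

(* In the order of decreasing [class_key], B1 is lower triangular with a
   positive diagonal, and [ih] comes last. *)
Lemma B1_lower_triangular : (forall i j, E i j -> 0 < mu i j) ->
  exists s : {perm 'I_I},
    [/\ nat_of_ord (s ih) = I.-1,
        (forall i k, (nat_of_ord (s i) < nat_of_ord (s k))%N -> B1 i k = 0),
        (forall i, 0 < B1 i i) &
        B1 ih ih = mu ih jh].
Proof.
move=> mu_pos; have [s [s_rank s_order]] := rank_perm class_key_inj.
exists s; split.
- rewrite s_rank; have -> : [set k | (class_key ih < class_key k)%N] = [set~ ih].
    apply/setP => k; rewrite !inE; have [->|nk] := eqVneq k ih; first by rewrite ltnn.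
    exact: class_key_ih.
  by rewrite cardsC1 card_ord.
- move=> i k /s_order key_ki; have [F [hF Fsupp _]] := path_flow_ex k.
  rewrite (B1_column hF) big1 // => j _.
  suff -> : F i j = 0 by rewrite mulr0.
  apply/eqP; apply: contraT => /Fsupp [ik|d]; first by rewrite ik ltnn in key_ki.
  by have := ltn_trans key_ki (class_key_mono _ _ d); rewrite ltnn.
- by move=> i; rewrite B1_diag; have [_ e _] := parent_class i; exact: mu_pos.
- by rewrite B1_diag ppool_ih.
Qed.

(* The drift representation: writing the centered queues q = x - alpha >= 0
   and idle servers y = -beta >= 0 as Q u^c and Y u^s with u^c, u^s in the
   simplices, one has <e,x> = Q - Y and zeta = min(Q, Y). *)
Lemma drift_representation (h xb : 'cV[R]_I) (zb : 'M[R]_(I, J)) :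
  in_RG E zb -> (forall i, 0 <= xb i 0 - \sum_j zb i j) ->
  (forall j, 0 <= - \sum_i zb i j) ->
  exists (uc : 'cV[R]_I) (us : 'cV[R]_J), [/\ in_simplex uc, in_simplex us &
    bvec E h mu zb =
      h - B1 *m (xb - posp (\sum_i xb i 0) *: uc) + negp (\sum_i xb i 0) *: (B2 *m us)
        + zeta xb zb *: (B1 *m uc + B2 *m us)].
Proof.
move=> zbG queue_ge0 idle_ge0.
pose alpha : 'cV[R]_I := \col_i \sum_j zb i j.
pose beta : 'cV[R]_J := \col_j \sum_i zb i j.
have hD : in_D alpha beta.
  rewrite /in_D; under eq_bigr do rewrite mxE; under [RHS]eq_bigr do rewrite mxE.
  exact: exchange_big.
have [PG Prow Pcol] := hPsi _ _ hD.
have Psi_zb : Psi alpha beta = zb.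
  by apply: tree_flow_unique => // [i|j]; rewrite ?Prow ?Pcol mxE.
have service : \col_i (\sum_(j | E i j) mu i j * zb i j) = B1 *m alpha + B2 *m beta.
  by apply/matrixP => i l; rewrite ord1 mxE -(hB.2 _ _ hD) Psi_zb.
pose q : 'cV[R]_I := \col_i (xb i 0 - \sum_j zb i j).
pose y : 'cV[R]_J := \col_j (- \sum_i zb i j).
have q_ge0 : forall i, 0 <= q i 0 by move=> i; rewrite mxE.
have y_ge0 : forall j, 0 <= y j 0 by move=> j; rewrite mxE.
have [uc [uc_simplex q_eq]] := simplex_scale ih q_ge0.
have [us [us_simplex y_eq]] := simplex_scale jh y_ge0.
exists uc, us; split => //.
set Q := \sum_i q i 0 in q_eq; set Y := \sum_j y j 0 in y_eq.
have eQ : Q = \sum_i (xb i 0 - \sum_j zb i j) by apply: eq_bigr => i _; rewrite mxE.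
have eY : Y = \sum_j (- \sum_i zb i j) by apply: eq_bigr => j _; rewrite mxE.
have sx_eq : \sum_i xb i 0 = Q - Y.
  by rewrite eQ eY sumrB sumrN opprK (exchange_big _ _ _ _ _ (fun i j => zb i j)) subrK.
have alpha_eq : alpha = xb - Q *: uc.
  by rewrite -q_eq; apply/matrixP => i l; rewrite ord1 !mxE opprB addrC subrK.
have beta_eq : beta = - (Y *: us).
  by rewrite -y_eq; apply/matrixP => j l; rewrite ord1 !mxE opprK.
have -> : bvec E h mu zb = h - (B1 *m alpha + B2 *m beta).
  by rewrite -service; apply/matrixP => i l; rewrite ord1 !mxE.
rewrite alpha_eq beta_eq sx_eq /zeta -eQ -eY.
by rewrite -drift_identity posp_add_min negp_add_min.
Qed.

End Coefficients.
End SpanningTree.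

Local Open Scope classical_set_scope.

Theorem proposition1 (R : realType) (I J : nat) (E : 'I_I -> 'I_J -> bool)
  (lamn : nat -> 'I_I -> R) (mun : nat -> 'I_I -> 'I_J -> R)
  (Nn : nat -> 'I_J -> nat)
  (lam : 'I_I -> R) (mu : 'I_I -> 'I_J -> R) (nu : 'I_J -> R)
  (xs : 'M[R]_(I, J)) :
  is_tree E ->
  (forall m i, 0 < lamn m i) ->
  (forall m i j, E i j -> 0 < mun m i j) ->
  (forall i, 0 < lam i) -> (forall j, 0 < nu j) ->
  (forall i j, E i j -> 0 < mu i j) ->
  (forall i, (fun m : nat => lamn m i / m%:R) @ \oo --> lam i) ->
  (forall j, (fun m : nat => (Nn m j)%:R / m%:R) @ \oo --> nu j) ->
  (forall i j, E i j -> (fun m : nat => mun m i j) @ \oo --> mu i j) ->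
  (forall i, exists l : R,
     (fun m : nat => (lamn m i - m%:R * lam i) / Num.sqrt m%:R) @ \oo --> l) ->
  (forall i j, E i j -> exists l : R,
     (fun m : nat => Num.sqrt m%:R * (mun m i j - mu i j)) @ \oo --> l) ->
  (forall j, exists l : R,
     (fun m : nat => Num.sqrt m%:R * ((Nn m j)%:R / m%:R - nu j)) @ \oo --> l) ->
  lp_unique_solution E lam mu nu xs ->
  (forall j, \sum_i xs i j = 1) ->
  (forall i j, E i j -> 0 < xs i j) ->
  forall (n : nat), (0 < n)%N ->
  forall (ih : 'I_I) (jh : 'I_J), E ih jh ->
  forall (Psi : 'cV[R]_I -> 'cV[R]_J -> 'M[R]_(I, J)), is_Psi E Psi ->
  forall (B1 : 'M[R]_I) (B2 : 'M[R]_(I, J)), is_B E (mun n) jh Psi B1 B2 ->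
  forall (xb : 'cV[R]_I) (zb : 'M[R]_(I, J)),
  in_S n xs (Nn n) xb ->
  in_Zb E n xs (Nn n) xb zb ->
  [/\ (exists (uc : 'cV[R]_I) (us : 'cV[R]_J),
         [/\ in_simplex uc, in_simplex us &
           let h := hvec E n (lamn n) (mun n) xs (Nn n) in
           let sx := \sum_i xb i 0 in
           bvec E h (mun n) zb =
             h - B1 *m (xb - posp sx *: uc) + negp sx *: (B2 *m us)
               + zeta xb zb *: (B1 *m uc + B2 *m us)]),
      (forall i, B2 i jh = 0) &
      (exists s : {perm 'I_I},
         [/\ nat_of_ord (s ih) = I.-1,
             (forall i k, (nat_of_ord (s i) < nat_of_ord (s k))%N -> B1 i k = 0),
             (forall i, 0 < B1 i i) &
             B1 ih ih = mun n ih jh])].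
Proof.
move=> [conn card_edges] _ mun_pos _ _ _ _ _ _ _ _ _ [[xsG _ _] _ _] xs_col1 _.
move=> n n_gt0 ih jh Eh Psi hPsi B1 B2 hB xb zb _ [x [z [xb_def zb_def wc]]].
split.
- apply: (drift_representation conn card_edges hPsi hB (ih := ih)).
  + exact: (zb_in_RG n_gt0 zb_def wc xsG).
  + exact: (scaled_queue_ge0 n_gt0 xb_def zb_def wc).
  + exact: (scaled_idle_ge0 n_gt0 zb_def wc xs_col1).
- exact: hB.1.
- exact: (B1_lower_triangular conn card_edges hPsi hB Eh (mun_pos n)).
Qed.
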